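(* Let $\mu>0$, $\tau>0$, $\kappa>0$, $n\in\mathbb N=\{0,1,2,\dots\}$ be fixed, and for $\alpha>0$ and $\lambda\in\mathbb C$ with $\operatorname{Re}\lambda>-(\mu+\kappa)$ let $$\Delta(\lambda,\alpha)=1-(1-\ln\alpha)\,e^{-\lambda\tau}\Big(1+\frac{\lambda}{\mu+\kappa}\Big)^{-n-1}.$$ Then $\Delta(\pm i\omega,\alpha)=0$ for some $\omega>0$ if and only if $\omega$ solves $$\omega\tau+(n+1)\arctan\frac{\omega}{\mu+\kappa}=\pi+2k\pi\ \text{ for some }k\in\mathbb N,\qquad\text{and}\qquad \alpha=\exp\Big(1+\Big(1+\frac{\omega^2}{(\mu+\kappa)^2}\Big)^{\frac{n+1}{2}}\Big).$$ Furthermore, for each $k\in\mathbb N$ the first equation has exactly one solution $\omega_k>0$, so that $\Delta(\cdot,\alpha)$ has exactly one pair of purely imaginary roots $\pm i\omega_k$ for $\alpha=\alpha_k:=\exp\big(1+(1+\omega_k^2/(\mu+\kappa)^2)^{(n+1)/2}\big)$; moreover $\omega_k\to+\infty$ and $\alpha_k\to+\infty$ as $k\to+\infty$. Finally, for fixed $k\in\mathbb N$, writing $\omega_k(n)$ and $\alpha_k(n)$ for these quantities as functions of $n\in\mathbb N$ (other parameters fixed), $\omega_k(n)\to0$ and $\alpha_k(n)\to e^2$ as $n\to+\infty$.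
   Context: $\Delta$ is the characteristic function of the linearization at the positive equilibrium $\bar u(a)=\ln(\alpha)e^{-\mu a}$ of the age-structured model $\partial_tu+\partial_au=-\mu u$, $u(t,0)=\alpha\,f(\int_0^\infty\beta(a)u(t,a)\,da)$ with $f(x)=xe^{-x}$ and birth function $\beta(a)=C_0(a-\tau)^ne^{-\kappa(a-\tau)}\mathbf 1_{[\tau,\infty)}(a)$, $C_0>0$ chosen so that $\int_0^\infty\beta(a)e^{-\mu a}\,da=1$; indeed $\Delta(\lambda,\alpha)=1-(1-\ln\alpha)\int_0^\infty\beta(a)e^{-(\lambda+\mu)a}\,da$. *)

From Stdlib Require Import Reals.
From Coquelicot Require Import Coquelicot.
Open Scope R_scope.

Definition cexp (z : C) : C :=
  (exp (Re z) * cos (Im z), exp (Re z) * sin (Im z)).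

Fixpoint cpow (z : C) (m : nat) : C :=
  match m with
  | O => RtoC 1
  | S m' => Cmult z (cpow z m')
  end.

Definition DeltaC (mu tau kappa : R) (n : nat) (lam : C) (alpha : R) : C :=
  Cminus (RtoC 1)
    (Cmult (Cmult (RtoC (1 - ln alpha)) (cexp (Cmult (Copp lam) (RtoC tau))))
       (Cinv (cpow (Cplus (RtoC 1) (Cdiv lam (RtoC (mu + kappa)))) (n + 1)))).

Definition iR (w : R) : C := (0, w).

Definition phase_eq (mu tau kappa : R) (n : nat) (w : R) (k : nat) : Prop :=
  w * tau + INR (n + 1) * atan (w / (mu + kappa)) = PI + 2 * INR k * PI.

Definition alpha_of (mu kappa : R) (n : nat) (w : R) : R :=
  exp (1 + Rpower (1 + w ^ 2 / (mu + kappa) ^ 2) (INR (n + 1) / 2)).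

From Stdlib Require Import Reals Lra Lia ZArith.
From Coquelicot Require Import Coquelicot.
Open Scope R_scope.

(* With t = w/(mu+kappa), the equation Delta(i w, alpha) = 0 says that
   (1 - ln alpha) e^{-i w tau} equals (1 + i t)^(n+1), whose modulus is
   r = (1 + t^2)^((n+1)/2) >= 1 and whose argument is (n+1) atan t.  Hence
   the phase phi(w) = w tau + (n+1) atan t has sin phi = 0 and r cos phi = 1 - ln alpha;
   as ln alpha > 0 this forces cos phi = -1, i.e. phi = (2k+1) pi and ln alpha = 1 + r.
   The phase is continuous, strictly increasing and vanishes at 0, so it takes each
   value (2k+1) pi exactly once, at omega_k; since atan < pi/2, omega_k tau grows like
   2 k pi.  For fixed k, (n+1) atan t < (2k+1) pi and tan y <= y / cos 1 on [0, 1] give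
   t = O(1/n), so omega_k(n) -> 0 and r <= exp((n+1) t^2 / 2) -> 1, i.e. alpha_k(n) -> e^2. *)

Lemma Cminus_1_div_eq0 (a b : C) : b <> 0 ->
  Cminus 1 (Cmult a (Cinv b)) = 0 <-> a = b.
Proof.
  intro Hb. split.
  - intro H. replace a with (Cmult (Cminus 1 (Cminus 1 (Cmult a (Cinv b)))) b)
      by (field; exact Hb).
    rewrite H. ring.
  - intros ->. field. exact Hb.
Qed.

Lemma cexp_neg_iR (w tau : R) :
  cexp (Cmult (Copp (iR w)) (RtoC tau)) = (cos (w * tau), - sin (w * tau)).
Proof.
  unfold cexp, iR, RtoC, Cmult, Copp; simpl.
  replace (- 0 * tau - - w * 0) with 0 by ring.
  replace (- 0 * 0 + - w * tau) with (- (w * tau)) by ring.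
  rewrite exp_0, cos_neg, sin_neg. f_equal; ring.
Qed.

Lemma one_plus_iR_polar (t : R) :
  Cplus 1 (iR t) = (sqrt (1 + t * t) * cos (atan t), sqrt (1 + t * t) * sin (atan t)).
Proof.
  rewrite cos_atan, sin_atan. unfold Rsqr.
  assert (0 < sqrt (1 + t * t)) by (apply sqrt_lt_R0; nra).
  unfold Cplus, iR, RtoC; simpl. f_equal; field; lra.
Qed.

Lemma cpow_polar (r th : R) (m : nat) :
  cpow (r * cos th, r * sin th) m = (r ^ m * cos (INR m * th), r ^ m * sin (INR m * th)).
Proof.
  induction m as [|m IH]; simpl cpow.
  - rewrite Rmult_0_l, cos_0, sin_0. unfold RtoC. f_equal; simpl; ring.
  - rewrite IH, S_INR. replace ((INR m + 1) * th) with (th + INR m * th) by ring.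
    rewrite cos_plus, sin_plus. unfold Cmult; simpl. f_equal; ring.
Qed.

Lemma polar_nonzero (r th : R) : 0 < r -> (r * cos th, r * sin th) <> RtoC 0.
Proof.
  intros Hr H. injection H as Hc Hs. pose proof (sin2_cos2 th) as Hsc. unfold Rsqr in Hsc.
  apply Rmult_integral in Hc, Hs. nra.
Qed.

Lemma conj_polar_eq_polar (b r a th : R) : 0 < r ->
  (b * cos a, - (b * sin a)) = (r * cos th, r * sin th) <->
  r * cos (a + th) = b /\ sin (a + th) = 0.
Proof.
  intro Hr. rewrite pair_equal_spec. pose proof (sin2_cos2 a) as Ha. unfold Rsqr in Ha.
  split.
  - intros [H1 H2]. rewrite cos_plus, sin_plus. split.
    + transitivity (cos a * (r * cos th) - sin a * (r * sin th)); [ring|].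
      rewrite <- H1, <- H2. transitivity (b * (sin a * sin a + cos a * cos a)); [ring|].
      rewrite Ha. ring.
    + apply (Rmult_eq_reg_l r); [| lra].
      transitivity (sin a * (r * cos th) + cos a * (r * sin th)); [ring|].
      rewrite <- H1, <- H2. ring.
  - intros [H1 H2]. replace th with ((a + th) - a) by ring.
    rewrite cos_minus, sin_minus, H2, <- H1. split; ring.
Qed.

Lemma cos_INR_mult_PI (N : nat) : cos (INR N * PI) = (-1) ^ N.
Proof.
  induction N as [|N IH].
  - rewrite Rmult_0_l. apply cos_0.
  - rewrite S_INR, Rmult_plus_distr_r, Rmult_1_l, neg_cos, IH. simpl. ring.
Qed.

Lemma cos_eq_m1_odd_PI (x : R) : 0 < x -> cos x = -1 ->
  exists k : nat, x = PI + 2 * INR k * PI.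
Proof.
  intros Hx Hc.
  assert (Hs : sin x = 0) by (pose proof (sin2_cos2 x) as H; unfold Rsqr in H; nra).
  destruct (sin_eq_0_0 x Hs) as [z Hz].
  assert (Hz0 : (0 <= z)%Z) by (apply le_IZR; pose proof PI_RGT_0; nra).
  rewrite <- (Z2Nat.id z Hz0), <- INR_IZR_INZ in Hz. subst x.
  rewrite cos_INR_mult_PI in Hc.
  destruct (Nat.Even_or_Odd (Z.to_nat z)) as [[j Hj] | [j Hj]]; rewrite Hj in *.
  - rewrite pow_1_even in Hc. lra.
  - exists j. rewrite plus_INR, mult_INR. simpl. ring.
Qed.

Lemma atan_ge_cos_1 (x : R) : 0 <= x -> atan x <= 1 -> cos 1 * x <= atan x.
Proof.
  intros Hx H1. set (y := atan x) in *.
  assert (Hy : 0 <= y) by (unfold y; rewrite <- atan_0; destruct Hx as [Hx | <-];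
    [left; apply atan_increasing, Hx | right; reflexivity]).
  pose proof PI2_1 as Hpi.
  assert (Hc1 : 0 < cos 1) by (apply cos_gt_0; lra).
  assert (Hcy : cos 1 <= cos y) by (apply cos_decr_1; lra).
  assert (Hsin : 0 <= sin y <= y).
  { split; [apply sin_ge_0; lra |].
    destruct Hy as [Hy | <-]; [left; apply sin_lt_x, Hy | rewrite sin_0; lra]. }
  assert (Hx' : x * cos y = sin y)
    by (unfold y; rewrite <- (tan_atan x) at 1; fold y; unfold tan; field; lra).
  nra.
Qed.

Lemma exp_le_compat (x y : R) : x <= y -> exp x <= exp y.
Proof. intros [H | ->]; [left; apply exp_increasing, H | right; reflexivity]. Qed.

Lemma eventually_INR_gt (M : R) : eventually (fun n => M < INR n).
Proof. exact (proj2 (is_lim_seq_spec _ _) is_lim_seq_INR M). Qed.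

Lemma is_lim_seq_scal_pos_p_infty (a : R) (u : nat -> R) : 0 < a ->
  is_lim_seq u p_infty -> is_lim_seq (fun k => a * u k) p_infty.
Proof.
  intros Ha Hu. apply (is_lim_seq_mult _ _ a p_infty); [apply is_lim_seq_const | exact Hu |].
  apply is_Rbar_mult_sym, is_Rbar_mult_p_infty_pos. exact Ha.
Qed.

Lemma is_lim_seq_affine_INR (a b : R) : 0 < a ->
  is_lim_seq (fun k => a * INR k + b) p_infty.
Proof.
  intro Ha. apply (is_lim_seq_plus _ _ p_infty b).
  - apply is_lim_seq_scal_pos_p_infty; [exact Ha | apply is_lim_seq_INR].
  - apply is_lim_seq_const.
  - reflexivity.
Qed.

Lemma is_lim_seq_div_INR_succ (C : R) : is_lim_seq (fun n => C / INR (n + 1)) 0.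
Proof.
  apply (is_lim_seq_ext (fun n => C * / INR (S n))).
  { intro n. rewrite Nat.add_1_r. reflexivity. }
  apply (is_lim_seq_incr_1 (fun n => C * / INR n)).
  replace (Finite 0) with (Rbar_mult C (Rbar_inv p_infty)) by (simpl; f_equal; ring).
  apply is_lim_seq_scal_l, is_lim_seq_inv; [apply is_lim_seq_INR | discriminate].
Qed.

(* [modulus t m] is |(1 + i t)^m|, and [phase tau c m w] is the argument of
   e^{i w tau} (1 + i w / c)^m. *)
Definition modulus (t : R) (m : nat) : R := sqrt (1 + t * t) ^ m.

Lemma modulus_pos (t : R) (m : nat) : 0 < modulus t m.
Proof. apply pow_lt, sqrt_lt_R0. nra. Qed.

Lemma modulus_opp (t : R) (m : nat) : modulus (- t) m = modulus t m.
Proof. unfold modulus. do 3 f_equal. ring. Qed.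

Lemma modulus_Rpower (t : R) (m : nat) : modulus t m = Rpower (1 + t ^ 2) (INR m / 2).
Proof.
  assert (Hpos : 0 < 1 + t * t) by nra.
  unfold modulus. rewrite <- Rpower_pow by (apply sqrt_lt_R0; exact Hpos).
  rewrite <- Rpower_sqrt, Rpower_mult by exact Hpos. f_equal; [ring | field].
Qed.

Lemma modulus_ge_1 (t : R) (m : nat) : 1 <= modulus t m.
Proof.
  apply pow_R1_Rle. rewrite <- sqrt_1 at 1. apply sqrt_le_1_alt. nra.
Qed.

Lemma modulus_ge (t : R) (m : nat) : 0 <= t -> (0 < m)%nat -> t <= modulus t m.
Proof.
  intros Ht Hm. unfold modulus.
  assert (Hs : t <= sqrt (1 + t * t)).
  { rewrite <- (sqrt_square t) at 1 by exact Ht. apply sqrt_le_1_alt. lra. }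
  assert (Hs1 : 1 <= sqrt (1 + t * t)).
  { rewrite <- sqrt_1 at 1. apply sqrt_le_1_alt. nra. }
  pose proof (Rle_pow _ 1 m Hs1 Hm). simpl in *. lra.
Qed.

Lemma modulus_lt (t1 t2 : R) (m : nat) : 0 <= t1 < t2 -> (0 < m)%nat ->
  modulus t1 m < modulus t2 m.
Proof.
  intros Ht Hm. rewrite !modulus_Rpower. apply Rlt_Rpower_l.
  - apply Rdiv_lt_0_compat; [apply lt_0_INR; exact Hm | lra].
  - split; nra.
Qed.

Lemma modulus_le_exp (t : R) (m : nat) : modulus t m <= exp (INR m / 2 * t ^ 2).
Proof.
  rewrite modulus_Rpower.
  replace (exp (INR m / 2 * t ^ 2)) with (Rpower (exp (t ^ 2)) (INR m / 2))
    by (unfold Rpower; rewrite ln_exp; reflexivity).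
  apply Rle_Rpower_l.
  - pose proof (pos_INR m). lra.
  - split; [nra | apply exp_ineq1_le].
Qed.

Definition phase (tau c : R) (m : nat) (w : R) : R := w * tau + INR m * atan (w / c).

Lemma phase_0 (tau c : R) (m : nat) : phase tau c m 0 = 0.
Proof. unfold phase. rewrite Rdiv_0_l, atan_0. ring. Qed.

Lemma phase_opp (tau c : R) (m : nat) (w : R) : c <> 0 ->
  phase tau c m (- w) = - phase tau c m w.
Proof.
  intro Hc. unfold phase. replace (- w / c) with (- (w / c)) by (field; exact Hc).
  rewrite atan_opp. ring.
Qed.

Lemma phase_lt (tau c : R) (m : nat) (w1 w2 : R) : 0 < c -> 0 < tau -> w1 < w2 ->
  phase tau c m w1 < phase tau c m w2.
Proof.
  intros Hc Htau Hw. unfold phase.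
  assert (atan (w1 / c) < atan (w2 / c))
    by (apply atan_increasing, Rmult_lt_compat_r; [apply Rinv_0_lt_compat |]; lra).
  pose proof (pos_INR m). nra.
Qed.

Lemma phase_pos (tau c : R) (m : nat) (w : R) : 0 < c -> 0 < tau -> 0 < w ->
  0 < phase tau c m w.
Proof. intros. rewrite <- (phase_0 tau c m). apply phase_lt; assumption. Qed.

Lemma phase_inj (tau c : R) (m : nat) (w1 w2 : R) : 0 < c -> 0 < tau ->
  phase tau c m w1 = phase tau c m w2 -> w1 = w2.
Proof.
  intros Hc Htau H. destruct (Rtotal_order w1 w2) as [Hw | [Hw | Hw]]; [| exact Hw |].
  - pose proof (phase_lt tau c m _ _ Hc Htau Hw). lra.
  - pose proof (phase_lt tau c m _ _ Hc Htau Hw). lra.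
Qed.

Lemma phase_continuous (tau c : R) (m : nat) : continuity (phase tau c m).
Proof.
  intro w. apply continuity_pt_filterlim.
  apply (ex_derive_continuous (V := R_NormedModule)). unfold phase. auto_derive. exact I.
Qed.

Lemma phase_root_ex (tau c : R) (m : nat) (T : R) : 0 < c -> 0 < tau -> 0 < T ->
  {w : R | 0 < w /\ phase tau c m w = T}.
Proof.
  intros Hc Htau HT.
  assert (Hcont : continuity (fun w => phase tau c m w - T))
    by (apply continuity_minus; [apply phase_continuous | apply continuity_const; now intros ? ?]).
  assert (Hend : 0 <= phase tau c m (T / tau) - T).
  { unfold phase. replace (T / tau * tau) with T by (field; lra).
    assert (0 < atan (T / tau / c)).
    { rewrite <- atan_0. apply atan_increasing, Rdiv_lt_0_compat; [apply Rdiv_lt_0_compat |]; lra. }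
    pose proof (pos_INR m). nra. }
  destruct (IVT_cor _ 0 (T / tau) Hcont) as [w [[Hw0 _] Hw]].
  - apply Rlt_le, Rdiv_lt_0_compat; assumption.
  - rewrite phase_0. nra.
  - exists w. split; [| lra].
    destruct Hw0 as [Hw0 | <-]; [exact Hw0 |]. rewrite phase_0 in Hw. lra.
Qed.

Lemma odd_multiple_PI_pos (k : nat) : 0 < PI + 2 * INR k * PI.
Proof. pose proof PI_RGT_0. pose proof (pos_INR k). nra. Qed.

Lemma phase_condition (r a p : R) : 1 <= r -> 0 < a -> 0 < p ->
  (r * cos p = 1 - a /\ sin p = 0) <->
  (exists k : nat, p = PI + 2 * INR k * PI) /\ a = 1 + r.
Proof.
  intros Hr Ha Hp. split.
  - intros [Hcos Hsin].
    (* [cos p = 1] would give [r = 1 - a < 1]. *)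
    assert (Hc : cos p = -1).
    { pose proof (sin2_cos2 p) as H. unfold Rsqr in H. rewrite Hsin in H.
      pose proof (COS_bound p). nra. }
    split; [exact (cos_eq_m1_odd_PI p Hp Hc) | rewrite Hc in Hcos; lra].
  - intros [[k ->] ->]. rewrite cos_period, sin_period, cos_PI, sin_PI. lra.
Qed.

Lemma DeltaC_iR_eq0 mu tau kappa n alpha w : mu + kappa <> 0 ->
  DeltaC mu tau kappa n (iR w) alpha = RtoC 0 <->
  modulus (w / (mu + kappa)) (n + 1) * cos (phase tau (mu + kappa) (n + 1) w) = 1 - ln alpha /\
  sin (phase tau (mu + kappa) (n + 1) w) = 0.
Proof.
  intro Hc. unfold DeltaC, phase, modulus.
  replace (Cdiv (iR w) (RtoC (mu + kappa))) with (iR (w / (mu + kappa)))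
    by (unfold Cdiv, Cinv, Cmult, iR, RtoC; simpl; f_equal; field; exact Hc).
  rewrite one_plus_iR_polar, cpow_polar, cexp_neg_iR.
  rewrite Cminus_1_div_eq0 by (apply polar_nonzero, modulus_pos).
  rewrite <- (conj_polar_eq_polar (1 - ln alpha)) by apply modulus_pos.
  unfold Cmult, RtoC; simpl. split; intro H; rewrite <- H; f_equal; ring.
Qed.

Lemma DeltaC_conj_roots mu tau kappa n alpha w : mu + kappa <> 0 ->
  (DeltaC mu tau kappa n (iR w) alpha = RtoC 0 /\
   DeltaC mu tau kappa n (iR (- w)) alpha = RtoC 0) <->
  DeltaC mu tau kappa n (iR w) alpha = RtoC 0.
Proof.
  intro Hc. rewrite !DeltaC_iR_eq0 by exact Hc.
  replace (- w / (mu + kappa)) with (- (w / (mu + kappa))) by (field; exact Hc).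
  rewrite modulus_opp, phase_opp, cos_neg, sin_neg by exact Hc.
  split; [tauto | intros [H1 H2]; rewrite H2; repeat split; lra].
Qed.

Lemma alpha_of_modulus mu kappa n w : mu + kappa <> 0 ->
  alpha_of mu kappa n w = exp (1 + modulus (w / (mu + kappa)) (n + 1)).
Proof.
  intro Hc. unfold alpha_of. rewrite modulus_Rpower. do 4 f_equal. field. exact Hc.
Qed.

Lemma imaginary_roots_iff mu tau kappa n alpha w :
  0 < mu + kappa -> 0 < tau -> 1 < alpha -> 0 < w ->
  (DeltaC mu tau kappa n (iR w) alpha = RtoC 0 /\
   DeltaC mu tau kappa n (iR (- w)) alpha = RtoC 0) <->
  (exists k : nat, phase_eq mu tau kappa n w k) /\ alpha = alpha_of mu kappa n w.
Proof.
  intros Hc Htau Halpha Hw.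
  assert (Hln : 0 < ln alpha) by (rewrite <- ln_1; apply ln_increasing; lra).
  rewrite DeltaC_conj_roots, DeltaC_iR_eq0, alpha_of_modulus by lra.
  rewrite phase_condition by (apply modulus_ge_1 || apply phase_pos || idtac; lra).
  split; intros [Hk Heq]; split; try exact Hk.
  - rewrite <- Heq. symmetry. apply exp_ln. lra.
  - rewrite Heq. apply ln_exp.
Qed.

Lemma alpha_of_gt_1 mu kappa n w : mu + kappa <> 0 -> 1 < alpha_of mu kappa n w.
Proof.
  intro Hc. rewrite alpha_of_modulus by exact Hc.
  pose proof (modulus_ge_1 (w / (mu + kappa)) (n + 1)).
  pose proof (exp_ineq1_le (1 + modulus (w / (mu + kappa)) (n + 1))). lra.
Qed.

Lemma alpha_of_inj mu kappa n w1 w2 : 0 < mu + kappa -> 0 < w1 -> 0 < w2 ->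
  alpha_of mu kappa n w1 = alpha_of mu kappa n w2 -> w1 = w2.
Proof.
  intros Hc Hw1 Hw2 H. rewrite !alpha_of_modulus in H by lra. apply exp_inv in H.
  assert (Hmono : forall u v, 0 < u < v ->
    modulus (u / (mu + kappa)) (n + 1) < modulus (v / (mu + kappa)) (n + 1)).
  { intros u v Huv. apply modulus_lt; [| lia].
    split; [apply Rlt_le, Rdiv_lt_0_compat |
            apply Rmult_lt_compat_r; [apply Rinv_0_lt_compat |]]; lra. }
  destruct (Rtotal_order w1 w2) as [Hw | [Hw | Hw]]; [| exact Hw |].
  - pose proof (Hmono w1 w2 (conj Hw1 Hw)). lra.
  - pose proof (Hmono w2 w1 (conj Hw2 Hw)). lra.
Qed.

Lemma phase_roots_tend_p_infty (tau c : R) (m : nat) (w : nat -> R) : 0 < tau ->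
  (forall k, phase tau c m (w k) = PI + 2 * INR k * PI) -> is_lim_seq w p_infty.
Proof.
  intros Htau Hw. pose proof PI_RGT_0.
  apply (is_lim_seq_le_p_loc (fun k => 2 * PI / tau * INR k + (PI - INR m * (PI / 2)) / tau)).
  - exists 0%nat. intros k _. specialize (Hw k). unfold phase in Hw.
    pose proof (atan_bound (w k / c)). pose proof (pos_INR m).
    apply (Rmult_le_reg_r tau); [exact Htau |].
    replace ((2 * PI / tau * INR k + (PI - INR m * (PI / 2)) / tau) * tau)
      with (2 * PI * INR k + (PI - INR m * (PI / 2))) by (field; lra).
    nra.
  - apply is_lim_seq_affine_INR. apply Rdiv_lt_0_compat; lra.
Qed.

Lemma alpha_of_tends_p_infty mu kappa n (w : nat -> R) : 0 < mu + kappa ->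
  (forall k, 0 < w k) -> is_lim_seq w p_infty ->
  is_lim_seq (fun k => alpha_of mu kappa n (w k)) p_infty.
Proof.
  intros Hc Hpos Hw.
  apply (is_lim_seq_le_p_loc (fun k => / (mu + kappa) * w k)).
  - exists 0%nat. intros k _. rewrite alpha_of_modulus by lra.
    assert (Ht : 0 <= w k / (mu + kappa)) by (apply Rlt_le, Rdiv_lt_0_compat; [apply Hpos | lra]).
    pose proof (modulus_ge _ (n + 1) Ht ltac:(lia)).
    pose proof (exp_ineq1_le (1 + modulus (w k / (mu + kappa)) (n + 1))).
    unfold Rdiv in *. lra.
  - apply is_lim_seq_scal_pos_p_infty; [apply Rinv_0_lt_compat; lra | exact Hw].
Qed.

Lemma phase_root_le (tau c : R) (m : nat) (w K : R) : 0 < c -> 0 < tau -> 0 < w ->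
  phase tau c m w = K -> K <= INR m -> cos 1 * INR m * (w / c) <= K.
Proof.
  intros Hc Htau Hw Hphase HK. unfold phase in Hphase.
  assert (HK0 : 0 < K) by (rewrite <- Hphase; apply phase_pos; assumption).
  assert (Ht : 0 <= w / c) by (apply Rlt_le, Rdiv_lt_0_compat; assumption).
  assert (Hatan : INR m * atan (w / c) <= K) by nra.
  assert (Hatan1 : atan (w / c) <= 1).
  { apply (Rmult_le_reg_l (INR m)); nra. }
  pose proof (atan_ge_cos_1 _ Ht Hatan1). nra.
Qed.

Section PhaseRootsLargeOrder.

Variables (tau c K : R) (w : nat -> R).
Hypotheses (Hc : 0 < c) (Htau : 0 < tau).
Hypothesis Hw : forall n, 0 < w n /\ phase tau c (n + 1) (w n) = K.

Lemma phase_roots_eventually_le :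
  eventually (fun n => 0 < w n / c <= K / cos 1 / INR (n + 1)).
Proof.
  apply (filter_imp (fun n => K < INR n)); [| apply eventually_INR_gt].
  intros n Hn. destruct (Hw n) as [Hpos Hphase].
  assert (Hm : 0 <= INR n < INR (n + 1)) by (split; [apply pos_INR | apply lt_INR; lia]).
  assert (Hc1 : 0 < cos 1) by (apply cos_gt_0; pose proof PI2_1; lra).
  pose proof (phase_root_le tau c (n + 1) (w n) K Hc Htau Hpos Hphase ltac:(lra)) as Hle.
  split; [apply Rdiv_lt_0_compat; assumption |].
  apply (Rmult_le_reg_l (cos 1 * INR (n + 1))); [nra |].
  replace (cos 1 * INR (n + 1) * (K / cos 1 / INR (n + 1))) with K by (field; split; lra).
  exact Hle.
Qed.

Lemma phase_roots_tend_0 : is_lim_seq w 0.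
Proof.
  apply (is_lim_seq_le_le_loc (fun _ => 0) _ (fun n => c * K / cos 1 / INR (n + 1))).
  - refine (filter_imp _ _ _ phase_roots_eventually_le). intros n [H0 H1].
    split; [apply Rlt_le, (Hw n) |].
    apply (Rmult_le_compat_l c) in H1; [| lra].
    replace (c * (w n / c)) with (w n) in H1 by (field; lra).
    unfold Rdiv in *. lra.
  - apply is_lim_seq_const.
  - apply is_lim_seq_div_INR_succ.
Qed.

Lemma modulus_phase_roots_tend_1 : is_lim_seq (fun n => modulus (w n / c) (n + 1)) 1.
Proof.
  set (E := K / cos 1).
  apply (is_lim_seq_le_le_loc (fun _ => 1) _ (fun n => exp (E ^ 2 / 2 / INR (n + 1)))).
  - refine (filter_imp _ _ _ phase_roots_eventually_le). intros n [H0 H1]. fold E in H1.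
    split; [apply modulus_ge_1 |].
    apply (Rle_trans _ _ _ (modulus_le_exp _ _)).
    assert (Hm : 0 < INR (n + 1)) by (apply lt_0_INR; lia).
    replace (E ^ 2 / 2 / INR (n + 1)) with (INR (n + 1) / 2 * (E / INR (n + 1)) ^ 2)
      by (field; lra).
    apply exp_le_compat, Rmult_le_compat_l; [lra |]. apply pow_incr. lra.
  - apply is_lim_seq_const.
  - rewrite <- exp_0. apply (is_lim_seq_continuous exp).
    + apply derivable_continuous_pt, derivable_pt_exp.
    + apply is_lim_seq_div_INR_succ.
Qed.

End PhaseRootsLargeOrder.

Lemma alpha_of_tends_exp_2 mu kappa (w : nat -> R) : mu + kappa <> 0 ->
  is_lim_seq (fun n => modulus (w n / (mu + kappa)) (n + 1)) 1 ->
  is_lim_seq (fun n => alpha_of mu kappa n (w n)) (exp 2).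
Proof.
  intros Hc Hmod.
  apply (is_lim_seq_ext (fun n => exp (1 + modulus (w n / (mu + kappa)) (n + 1)))).
  { intro n. symmetry. apply alpha_of_modulus, Hc. }
  replace 2 with (1 + 1) by ring.
  apply (is_lim_seq_continuous exp).
  - apply derivable_continuous_pt, derivable_pt_exp.
  - apply is_lim_seq_plus'; [apply is_lim_seq_const | exact Hmod].
Qed.

Theorem proposition7p2 (mu tau kappa : R)
  (Hmu : 0 < mu) (Htau : 0 < tau) (Hkappa : 0 < kappa) :
  (* characterisation of purely imaginary roots *)
  (forall (n : nat) (alpha w : R), 1 < alpha -> 0 < w ->
     (DeltaC mu tau kappa n (iR w) alpha = RtoC 0 /\
      DeltaC mu tau kappa n (iR (- w)) alpha = RtoC 0)
     <-> ((exists k : nat, phase_eq mu tau kappa n w k) /\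
          alpha = alpha_of mu kappa n w))
  /\
  exists omega : nat -> nat -> R,   (* omega n k = omega_k(n) *)
    (forall n k, 0 < omega n k /\ phase_eq mu tau kappa n (omega n k) k /\
       forall w, 0 < w -> phase_eq mu tau kappa n w k -> w = omega n k)
    /\
    (forall n k (w : R), 0 < w ->
       (DeltaC mu tau kappa n (iR w) (alpha_of mu kappa n (omega n k)) = RtoC 0 /\
        DeltaC mu tau kappa n (iR (- w)) (alpha_of mu kappa n (omega n k)) = RtoC 0)
       <-> w = omega n k)
    /\
    (forall n, is_lim_seq (fun k => omega n k) p_infty /\
               is_lim_seq (fun k => alpha_of mu kappa n (omega n k)) p_infty)
    /\
    (forall k, is_lim_seq (fun n => omega n k) 0 /\
               is_lim_seq (fun n => alpha_of mu kappa n (omega n k)) (exp 2)).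
Proof.
  assert (Hc : 0 < mu + kappa) by lra.
  split; [intros; apply imaginary_roots_iff; assumption |].
  pose (root n k := phase_root_ex tau (mu + kappa) (n + 1) _ Hc Htau (odd_multiple_PI_pos k)).
  exists (fun n k => proj1_sig (root n k)).
  assert (Hroot : forall n k, 0 < proj1_sig (root n k) /\
                              phase_eq mu tau kappa n (proj1_sig (root n k)) k)
    by (intros n k; exact (proj2_sig (root n k))).
  split; [| split; [| split]].
  - intros n k. destruct (Hroot n k) as [Hpos Hphase].
    repeat split; try assumption.
    intros w _ Hw. exact (phase_inj _ _ _ _ _ Hc Htau (eq_trans Hw (eq_sym Hphase))).
  - intros n k w Hw. destruct (Hroot n k) as [Hpos Hphase].
    rewrite imaginary_roots_iff by (try apply alpha_of_gt_1; lra). split.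
    + intros [_ Halpha]. exact (alpha_of_inj _ _ _ _ _ Hc Hw Hpos (eq_sym Halpha)).
    + intros ->. split; [exists k; exact Hphase | reflexivity].
  - intro n.
    assert (Hk : is_lim_seq (fun k => proj1_sig (root n k)) p_infty)
      by (apply (phase_roots_tend_p_infty tau (mu + kappa) (n + 1)); [exact Htau | apply Hroot]).
    split; [exact Hk | apply alpha_of_tends_p_infty; [exact Hc | apply Hroot | exact Hk]].
  - intro k. split.
    + apply (phase_roots_tend_0 tau (mu + kappa) (PI + 2 * INR k * PI)); auto.
    + apply alpha_of_tends_exp_2; [lra |].
      apply (modulus_phase_roots_tend_1 tau (mu + kappa) (PI + 2 * INR k * PI)); auto.
Qed.
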